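(* Let $a,b\ge0$ and let $w\in\tilde S_3$ be the affine Grassmannian element with $\lambda(w)=(2^a1^b)$. Then the number of reduced words of $w$ is $|R(w)|=\binom{\lfloor b/2+a\rfloor}{a}$.
   Context: $\tilde S_3$ is realized as bijections $w:\mathbb Z\to\mathbb Z$ with $w(i+3)=w(i)+3$, $w(1)+w(2)+w(3)=6$, generated by $s_0,s_1,s_2$; $R(w)$ is its set of reduced words. $w$ is affine Grassmannian if $w(1)<w(2)<w(3)$. The code $c(u)=(c_1,c_2,c_3)$, $c_i=\#\{j\in\mathbb Z:j>i,u(j)<u(i)\}$; $\lambda(w)$ is the partition conjugate to the decreasing rearrangement of $c(w^{-1})$; $w\mapsto\lambda(w)$ is a bijection from affine Grassmannian elements to partitions with all parts $<3$. *)

From HB Require Import structures.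
From mathcomp Require Import all_boot all_order all_algebra.
Set Implicit Arguments. Unset Strict Implicit. Unset Printing Implicit Defensive.
Import Order.TTheory GRing.Theory Num.Theory.

Local Open Scope ring_scope.

Definition is_affine_perm (w : int -> int) : Prop :=
  bijective w /\ (forall i : int, w (i + 3) = w i + 3) /\ w 1 + w 2 + w 3 = 6.

Definition affine_grassmannian (w : int -> int) : Prop := w 1 < w 2 /\ w 2 < w 3.

Definition sgen (i : 'I_3) (j : int) : int :=
  if ((j - (i : nat)%:Z) %% 3)%Z == 0 then j + 1
  else if ((j - (i : nat)%:Z - 1) %% 3)%Z == 0 then j - 1
  else j.

Definition word_prod (s : seq 'I_3) : int -> int :=
  foldr (fun i f => sgen i \o f) id s.

Definition card_is (T : eqType) (P : T -> Prop) (n : nat) : Prop :=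
  exists l : seq T, [/\ uniq l, size l = n & forall x, x \in l <-> P x].

Definition reduced_word (w : int -> int) (s : seq 'I_3) : Prop :=
  (forall z, word_prod s z = w z) /\
  (forall s' : seq 'I_3, (forall z, word_prod s' z = w z) -> (size s <= size s')%N).

Definition code_entry_is (u : int -> int) (i : int) (n : nat) : Prop :=
  card_is (fun j : int => i < j /\ u j < u i) n.

Definition conj_part (p : seq nat) : seq nat :=
  [seq count (fun x => (k < x)%N) p | k <- iota 0 (head 0%N p)].

(* lambda from the code (c1,c2,c3) of w^{-1}: conjugate of its decreasing
   rearrangement (zeros dropped, as partitions). *)
Definition lambda_of_code (c : seq nat) : seq nat :=
  conj_part (filter (fun x => (0 < x)%N) (sort geq c)).

(* Encode an affine permutation w by its window (w 1, w 2, w 3).  Left multiplication by s_i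
   acts on windows, and the Coxeter length sum over pairs of |floor((w_j - w_i) / 3)| changes by
   at most one under each s_i.  Hence the reduced words of w are the words of that length with
   the window of w, and their number obeys N_(n+1)(T) = sum_i N_n(s_i T).  For the windows of
   the Grassmannian elements with lambda = (2^a 1^b), the only neighbours short enough to be
   reached again belong to this family, so the recursion becomes Pascal's rule and gives
   binomial(a + floor(b/2), a).  Finally the code of w^-1 is a permutation of the numbers of
   inversions at positions 1, 2, 3 of w, which are read off the window and identify a and b. *)

From HB Require Import structures.
From mathcomp Require Import all_boot all_order all_algebra zify.

Set Implicit Arguments.
Unset Strict Implicit.
Unset Printing Implicit Defensive.

Import Order.TTheory GRing.Theory Num.Theory.
Local Open Scope ring_scope.

Definition periodic (f : int -> int) : Prop := forall j, f (j + 3) = f j + 3.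

Lemma periodicD f : periodic f -> forall j (k : int), f (j + 3 * k) = f j + 3 * k.
Proof.
move=> fP.
have fPn (n : nat) j : f (j + 3 * n%:Z) = f j + 3 * n%:Z.
  elim: n j => [|n IH] j; first by rewrite mulr0 !addr0.
  by rewrite (_ : j + _ = j + 3 * n%:Z + 3) ?fP ?IH; lia.
move=> j [] n; first exact: fPn.
by have := fPn n.+1 (j + 3 * Negz n); rewrite (_ : j + _ + _ = j); lia.
Qed.

Lemma periodic_eq f g : periodic f -> periodic g ->
  f 1 = g 1 -> f 2 = g 2 -> f 3 = g 3 -> f =1 g.
Proof.
move=> fP gP e1 e2 e3 j.
have [r r13 ->] : exists2 r : int, 1 <= r <= 3 & j = r + 3 * ((j - 1) %/ 3)%Z.
  by exists (j - 3 * ((j - 1) %/ 3)%Z); lia.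
rewrite (periodicD fP) (periodicD gP); congr (_ + _).
by have [->|[->|->]] : r = 1 \/ r = 2 \/ r = 3 by lia.
Qed.

Lemma periodic_can f g : periodic f -> cancel f g -> cancel g f -> periodic g.
Proof. by move=> fP fK gK j; rewrite -{1}[j]gK -fP fK. Qed.

Lemma periodic_inj_mod f : periodic f -> injective f ->
  forall j k, ((f j - f k) %% 3 = 0)%Z -> ((j - k) %% 3 = 0)%Z.
Proof.
move=> fP f_inj j k jk.
have : f j = f (k + 3 * ((f j - f k) %/ 3)%Z) by rewrite (periodicD fP); lia.
by move/f_inj; lia.
Qed.

Lemma sgenP (i : 'I_3) (j : int) :
  [\/ ((j - i%:Z) %% 3 = 0)%Z /\ sgen i j = j + 1,
      ((j - i%:Z) %% 3 = 1)%Z /\ sgen i j = j - 1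
    | ((j - i%:Z) %% 3 = 2)%Z /\ sgen i j = j].
Proof.
rewrite /sgen; have := ltn_ord i; move=> ?; repeat case: eqP => ?;
  [apply: Or31 | apply: Or32 | apply: Or33]; lia.
Qed.

(* Case-splits every [sgen i x], innermost first, and finishes with lia; [/bump] evaluates
   concrete ordinals such as [lift ord0 ord0]. *)
Ltac sgen_lia :=
  repeat match goal with |- context [sgen ?i ?x] =>
    lazymatch x with context [sgen _ _] => fail | _ => idtac end;
    have := ltn_ord i; have := sgenP i x; rewrite /= ?/bump /=;
    move: (sgen i x) => ?; case=> [][? ?] ?
  end; lia.

Lemma sgen_periodic i : periodic (sgen i).
Proof. by move=> j; sgen_lia. Qed.

Lemma sgenK i : involutive (sgen i).
Proof. by move=> j; sgen_lia. Qed.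

Lemma word_prod_periodic s : periodic (word_prod s).
Proof. by elim: s => [|i s IH] j //=; rewrite IH sgen_periodic. Qed.

Definition triple := (int * int * int)%type.

Definition window (f : int -> int) : triple := (f 1, f 2, f 3).

Lemma word_prod_window s w : periodic w ->
  word_prod s =1 w <-> window (word_prod s) = window w.
Proof.
move=> wP; split=> [e|[e1 e2 e3]]; first by rewrite /window !e.
exact: periodic_eq (word_prod_periodic s) wP e1 e2 e3.
Qed.

Definition act (i : 'I_3) (T : triple) : triple :=
  let: (x, y, z) := T in (sgen i x, sgen i y, sgen i z).

Lemma actK i : involutive (act i).
Proof. by case=> [[x y] z]; rewrite /act !sgenK. Qed.

Lemma window_cons i s : window (word_prod (i :: s)) = act i (window (word_prod s)).
Proof. by []. Qed.

Definition distinct_res (T : triple) : Prop :=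
  let: (x, y, z) := T in
  [/\ (y - x) %% 3 != 0, (z - x) %% 3 != 0 & (z - y) %% 3 != 0]%Z.

Definition pair_length (u v : int) : nat := absz ((v - u) %/ 3)%Z.

(* For windows with distinct residues this is the Coxeter length of the affine permutation. *)
Definition window_length (T : triple) : nat :=
  let: (x, y, z) := T in (pair_length x y + pair_length x z + pair_length y z)%N.

Lemma distinct_res_act i T : distinct_res T -> distinct_res (act i T).
Proof. by case: T => [[x y] z] /= [] *; split; sgen_lia. Qed.

Definition sgen_moves (i : 'I_3) (u : int) : bool := ((u - i%:Z) %% 3 != 2)%Z.

Lemma pair_length_sgen i u v : ((v - u) %% 3 != 0)%Z ->
  (pair_length (sgen i u) (sgen i v) <=
   pair_length u v + (sgen_moves i u && sgen_moves i v))%N.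
Proof. by rewrite /pair_length /sgen_moves; sgen_lia. Qed.

Lemma window_length_act i T :
  distinct_res T -> (window_length (act i T) <= (window_length T).+1)%N.
Proof.
case: T => [[x y] z] /= [xy xz yz].
have := pair_length_sgen i xy; have := pair_length_sgen i xz.
have := pair_length_sgen i yz; rewrite /sgen_moves; have := ltn_ord i.
(* Distinct residues: exactly one of the three pairs is moved by [s_i]. *)
lia.
Qed.

Lemma distinct_res_word s : distinct_res (window (word_prod s)).
Proof.
elim: s => [|i s IH]; last by rewrite window_cons; apply: distinct_res_act.
by rewrite /distinct_res /=; split; lia.
Qed.

Lemma window_length_word s : (window_length (window (word_prod s)) <= size s)%N.
Proof.
elim: s => [|i s IH] //; rewrite window_cons.
by apply: leq_trans (window_length_act i (distinct_res_word s)) _.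
Qed.

Fixpoint words (n : nat) : seq (seq 'I_3) :=
  if n is n'.+1 then [seq i :: s | i <- enum 'I_3, s <- words n'] else [:: [::]].

Lemma mem_words n s : (s \in words n) = (size s == n).
Proof.
elim: n s => [|n IH] [|i s] //; first by apply/allpairsP => -[[? ?] []].
rewrite /= eqSS -IH; apply/allpairsP/idP => [[[? ?] [_ ? [_ ->]]] // | s_n].
by exists (i, s); rewrite mem_enum.
Qed.

Lemma uniq_words n : uniq (words n).
Proof.
elim: n => [|n IH] //=; apply: allpairs_uniq; rewrite ?enum_uniq //.
by move=> [? ?] [? ?] _ _ [-> ->].
Qed.

Definition nwords (n : nat) (T : triple) : nat :=
  count (fun s => window (word_prod s) == T) (words n).

Lemma nwordsS n T : nwords n.+1 T = (\sum_(i < 3) nwords n (act i T))%N.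
Proof.
rewrite /nwords /= -big_enum /=; elim: (enum _) => [|i r IH]; first by rewrite big_nil.
rewrite big_cons /= count_cat IH count_map; congr (_ + _)%N.
apply: eq_count => s /=; rewrite window_cons.
by apply/eqP/eqP => [<-|->]; rewrite actK.
Qed.

Lemma nwords_eq0 n T : (n < window_length T)%N -> nwords n T = 0%N.
Proof.
move=> n_lt; apply/eqP; rewrite -leqn0 leqNgt -has_count; apply/hasP => -[s].
rewrite mem_words => /eqP s_n /eqP wT.
by have := window_length_word s; rewrite wT s_n leqNgt n_lt.
Qed.

Ltac act_lia := rewrite /act; congr (_, _, _); sgen_lia.

Lemma sum_act_cyclic (F : triple -> nat) x y z :
  ((x - z) %% 3 = 1)%Z -> ((y - z) %% 3 = 2)%Z ->
  (\sum_(i < 3) F (act i (x, y, z)) =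
   F (x - 1, y, z + 1)%R + F (x + 1, y - 1, z)%R + F (x, y + 1, z - 1)%R)%N.
Proof.
move=> xz yz; rewrite !big_ord_recl big_ord0 addn0.
have [zr|[zr|zr]] : (z %% 3 = 0 \/ z %% 3 = 1 \/ z %% 3 = 2)%Z by lia.
- have -> : act ord0 (x, y, z) = (x - 1, y, z + 1) by act_lia.
  have -> : act (lift ord0 ord0) (x, y, z) = (x + 1, y - 1, z) by act_lia.
  have -> : act (lift ord0 (lift ord0 ord0)) (x, y, z) = (x, y + 1, z - 1) by act_lia.
  lia.
- have -> : act ord0 (x, y, z) = (x, y + 1, z - 1) by act_lia.
  have -> : act (lift ord0 ord0) (x, y, z) = (x - 1, y, z + 1) by act_lia.
  have -> : act (lift ord0 (lift ord0 ord0)) (x, y, z) = (x + 1, y - 1, z) by act_lia.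
  lia.
- have -> : act ord0 (x, y, z) = (x + 1, y - 1, z) by act_lia.
  have -> : act (lift ord0 ord0) (x, y, z) = (x, y + 1, z - 1) by act_lia.
  have -> : act (lift ord0 (lift ord0 ord0)) (x, y, z) = (x - 1, y, z + 1) by act_lia.
  lia.
Qed.

Lemma sum_act_anticyclic (F : triple -> nat) x y z :
  ((x - z) %% 3 = 2)%Z -> ((y - z) %% 3 = 1)%Z ->
  (\sum_(i < 3) F (act i (x, y, z)) =
   F (x + 1, y, z - 1)%R + F (x, y - 1, z + 1)%R + F (x - 1, y + 1, z)%R)%N.
Proof.
move=> xz yz; pose G (T : triple) := let: (u, v, w) := T in F (v, u, w).
rewrite (eq_bigr (fun i => G (act i (y, x, z)))) // sum_act_cyclic //=; lia.
Qed.

(* The window of the affine Grassmannian element with lambda = (2^a 1^b). *)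
Definition grass_window (a b : nat) : triple :=
  (1 - 2 * (b./2)%:Z - a%:Z - (odd b)%:Z, 2 + (b./2)%:Z - a%:Z,
   3 + (b./2)%:Z + 2 * a%:Z + (odd b)%:Z).

Lemma window_length_grass a b : window_length (grass_window a b) = (a.*2 + b)%N.
Proof. rewrite /window_length /pair_length /grass_window; lia. Qed.

Lemma nwords_grass_window a b : nwords (a.*2 + b) (grass_window a b) = 'C(a + b./2, a).
Proof.
move: {-1}(a.*2 + b)%N (erefl (a.*2 + b)%N) => n.
elim: n a b => [|n IH] a b abn.
  by have [-> ->] : a = 0%N /\ b = 0%N by lia.
rewrite nwordsS; case E: (grass_window a b) => [[x y] z].
move: E; rewrite /grass_window => -[ex ey ez].
have eq0 T : (n < window_length T)%N -> nwords n T = 0%N := @nwords_eq0 n T.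
(* Each neighbour outside the family [grass_window] is longer than [n], hence unreachable. *)
case/boolP: (odd b) => b_par.
- rewrite sum_act_anticyclic; try lia.
  rewrite (eq0 (x, y - 1, z + 1)) ?(eq0 (x - 1, y + 1, z)) /= ?/pair_length; try lia.
  have -> : (x + 1, y, z - 1) = grass_window a b.-1.
    by rewrite /grass_window; congr (_, _, _); lia.
  have -> : b./2 = b.-1./2 by lia.
  by rewrite IH ?addn0 //; lia.
- rewrite sum_act_cyclic; try lia.
  rewrite (eq0 (x - 1, y, z + 1)) /= ?/pair_length; last lia.
  have left : (0 < b)%N ->
      nwords n (x + 1 : int, y - 1 : int, z) = 'C(a + b.-1./2, a).
    move=> b0; rewrite -IH; last lia.
    by congr nwords; rewrite /grass_window; congr (_, _, _); lia.
  have right : (0 < a)%N ->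
      nwords n (x, y + 1 : int, z - 1 : int) = 'C(a.-1 + b.+1./2, a.-1).
    move=> a0; rewrite -IH; last lia.
    by congr nwords; rewrite /grass_window; congr (_, _, _); lia.
  case: a b => [|a] [|b] in abn ex ey ez b_par left right *.
  + by [].
  + rewrite left // (eq0 (x, y + 1, z - 1)) /= ?/pair_length; last lia.
    by rewrite !bin0.
  + rewrite right // (eq0 (x + 1, y - 1, z)) /= ?/pair_length; last lia.
    by rewrite !add0n !addn0 !binn.
  + rewrite left // right // add0n.
    have -> : b.+1./2 = (b./2).+1 by lia.
    by rewrite !succnK (_ : b.+2./2 = (b./2).+1) // [in RHS]addnS [in RHS]binS addSnnS.
Qed.

Section CardIs.
Variables (T U : eqType) (P Q : T -> Prop).

Lemma card_is_unique m n : card_is P m -> card_is P n -> m = n.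
Proof.
move=> [l [ul <- lP]] [l' [ul' <- l'P]]; apply: perm_size.
by apply: uniq_perm => // x; apply/idP/idP => [/lP/l'P | /l'P/lP].
Qed.

Lemma card_is_eq n : (forall x, P x <-> Q x) -> card_is P n -> card_is Q n.
Proof.
by move=> PQ [l [ul sl lP]]; exists l; split=> // x; apply: iff_trans (lP x) (PQ x).
Qed.

Lemma card_is_can (f : T -> U) (g : U -> T) n :
  cancel f g -> cancel g f -> card_is P n -> card_is (fun y => P (g y)) n.
Proof.
move=> fK gK [l [ul sl lP]]; exists (map f l); split.
- by rewrite (map_inj_uniq (can_inj fK)).
- by rewrite size_map.
- by move=> y; rewrite -{1}[y]gK (mem_map (can_inj fK)).
Qed.

End CardIs.

Lemma card_reduced_word w N : periodic w ->
  nwords (window_length (window w)) (window w) = N -> (0 < N)%N ->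
  card_is (reduced_word w) N.
Proof.
move=> wP <- N_gt0; set L := window_length (window w).
have L_min s : word_prod s =1 w -> (L <= size s)%N.
  by move/(word_prod_window s wP) => sw; rewrite /L -sw window_length_word.
exists [seq s <- words L | window (word_prod s) == window w]; split.
- by rewrite filter_uniq ?uniq_words.
- by rewrite size_filter.
move=> s; rewrite mem_filter mem_words; split=> [/andP[/eqP sw /eqP sL] | [sw s_min]].
  by split=> [|s' /L_min]; [apply/(word_prod_window s wP) | rewrite sL].
move: N_gt0; rewrite -has_count => /hasP[s0]; rewrite mem_words => /eqP s0L /eqP s0w.
rewrite (iffLR (word_prod_window s wP) sw) eqxx eqn_leq L_min //=.
by rewrite /L -s0L s_min //; apply/(word_prod_window s0 wP).
Qed.

Definition prog (c : int) (n : nat) : seq int := [seq c - 3 * t%:Z | t <- iota 1 n].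

Lemma mem_prog c n q :
  (q \in prog c n) = ((c - q) %% 3 == 0)%Z && (3 <= c - q <= 3 * n%:Z).
Proof.
apply/mapP/idP => [[t] | qP]; first by rewrite mem_iota => t_in ->; lia.
by exists (absz ((c - q) %/ 3)%Z); [rewrite mem_iota|]; lia.
Qed.

Lemma uniq_prog c n : uniq (prog c n).
Proof. by rewrite map_inj_in_uniq ?iota_uniq // => t t' _ _; lia. Qed.

Lemma size_prog c n : size (prog c n) = n.
Proof. by rewrite size_map size_iota. Qed.

(* For periodic [w], the number of [q < p] with [q = p + d] mod 3 and [w p < w q]. *)
Definition inv_gap (w : int -> int) (p d : int) : nat :=
  absz (Num.max 0 ((w (p + d) - w p - 1) %/ 3)%Z).

Definition inversions (w : int -> int) (p : int) : seq int :=
  prog (p + 1) (inv_gap w p 1) ++ prog (p + 2) (inv_gap w p 2).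

Definition inv_count (w : int -> int) (p : int) : nat :=
  (inv_gap w p 1 + inv_gap w p 2)%N.

Lemma mem_inversions w p q : periodic w ->
  (q \in inversions w p) = (q < p) && (w p < w q).
Proof.
move=> wP; rewrite mem_cat !mem_prog /inv_gap.
have [d d13 ->] : exists2 d : int, 1 <= d <= 3 & q = p + d + 3 * ((q - p - 1) %/ 3)%Z.
  by exists (q - p - 3 * ((q - p - 1) %/ 3)%Z); lia.
rewrite (periodicD wP).
have [->|[->|->]] : d = 1 \/ d = 2 \/ d = 3 by lia.
all: rewrite ?wP; lia.
Qed.

Lemma card_inversions w p : periodic w ->
  card_is (fun q => q < p /\ w p < w q) (inv_count w p).
Proof.
move=> wP; exists (inversions w p); split.
- rewrite cat_uniq !uniq_prog andbT /=; apply/hasPn => q.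
  by rewrite !mem_prog; lia.
- by rewrite size_cat !size_prog.
- by move=> q; rewrite mem_inversions //; split=> /andP.
Qed.

Lemma code_entry_inv_count w winv i c : periodic w ->
  cancel w winv -> cancel winv w -> code_entry_is winv i c -> c = inv_count w (winv i).
Proof.
move=> wP wK winvK /card_is_unique; apply.
apply: card_is_eq (card_is_can wK winvK (card_inversions (winv i) wP)) => j /=.
by rewrite !winvK; split=> -[].
Qed.

Lemma inv_count_mod w p : periodic w ->
  inv_count w p = inv_count w (1 + ((p - 1) %% 3)%Z).
Proof.
move=> wP; set r := 1 + ((p - 1) %% 3)%Z; set k := ((p - 1) %/ 3)%Z.
have wD d : w (p + d) - w p = w (r + d) - w r.
  have -> : p + d = r + d + 3 * k by lia.
  have -> : p = r + 3 * k by lia.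
  by rewrite !(periodicD wP); lia.
by rewrite /inv_count /inv_gap !wD.
Qed.

Lemma perm_eq_123 (r1 r2 r3 : int) :
  1 <= r1 <= 3 -> 1 <= r2 <= 3 -> 1 <= r3 <= 3 -> r1 != r2 -> r1 != r3 -> r2 != r3 ->
  perm_eq [:: r1; r2; r3] [:: 1; 2; 3].
Proof.
move=> *; apply: uniq_perm; first by rewrite /= !inE; lia.
  by [].
by move=> x; rewrite !inE; lia.
Qed.

Lemma code_perm_inv_count w winv c1 c2 c3 :
  periodic w -> cancel w winv -> cancel winv w ->
  code_entry_is winv 1 c1 -> code_entry_is winv 2 c2 -> code_entry_is winv 3 c3 ->
  perm_eq [:: c1; c2; c3] [:: inv_count w 1; inv_count w 2; inv_count w 3].
Proof.
move=> wP wK winvK /(code_entry_inv_count wP wK winvK)->.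
move=> /(code_entry_inv_count wP wK winvK)-> /(code_entry_inv_count wP wK winvK)->.
have res_neq (j k : int) : j != k -> 1 <= j <= 3 -> 1 <= k <= 3 ->
    1 + ((winv j - 1) %% 3)%Z != 1 + ((winv k - 1) %% 3)%Z.
  move=> jk ? ?; apply/negP => /eqP jk_res.
  have := periodic_inj_mod (periodic_can wP wK winvK) (can_inj winvK) (j := j) (k := k).
  lia.
rewrite (inv_count_mod (winv 1) wP) (inv_count_mod (winv 2) wP).
rewrite (inv_count_mod (winv 3) wP).
apply: (perm_map (inv_count w) (s := [:: _; _; _]) (t := [:: 1; 2; 3])).
apply: perm_eq_123; try lia.
all: apply: res_neq; lia.
Qed.

Lemma map_iota_nseq (T : Type) (f : nat -> T) m n c :
  (forall k, (m <= k < m + n)%N -> f k = c) -> map f (iota m n) = nseq n c.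
Proof.
elim: n m => [|n IH] m fc //=.
by rewrite fc ?IH // => [k ?|]; [apply: fc|]; lia.
Qed.

Lemma lambda_of_code_perm (N1 N2 : nat) c :
  (N2 <= N1)%N -> perm_eq c [:: N1; N2; 0%N] ->
  lambda_of_code c = nseq N2 2%N ++ nseq (N1 - N2) 1%N.
Proof.
move=> N21 cP; rewrite /lambda_of_code.
have -> : sort geq c = [:: N1; N2; 0%N].
  by rewrite (perm_sortP _ _ _ _ _ cP) ?sorted_sort /= ?N21 //; move=> *; lia.
rewrite /conj_part (_ : head _ _ = N1); last by clear cP; case: N1 N21 => //; case: N2.
have cnt k :
    count (leq k.+1) [seq x <- [:: N1; N2; 0%N] | (0 < x)%N] = ((k < N1) + (k < N2))%N.
  by rewrite count_filter /=; lia.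
rewrite (eq_map cnt) (_ : iota 0 N1 = iota 0 N2 ++ iota N2 (N1 - N2)).
  by rewrite map_cat; congr (_ ++ _); apply: map_iota_nseq => k ?; lia.
by rewrite -iotaD subnKC.
Qed.

Lemma window_grassmannian w : periodic w -> injective w ->
  w 1 < w 2 -> w 2 < w 3 -> w 1 + w 2 + w 3 = 6 ->
  [/\ inv_count w 3 = 0%N, (inv_count w 2 <= inv_count w 1)%N &
      window w = grass_window (inv_count w 2) (inv_count w 1 - inv_count w 2)].
Proof.
move=> wP w_inj w12 w23 wsum.
have res (j k : int) : ((j - k) %% 3 != 0)%Z -> ((w j - w k) %% 3 != 0)%Z.
  by apply: contraNneq => /(periodic_inj_mod wP w_inj) ->.
have [A [C [o [w2E w3E]]]] : exists A C (o : bool),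
    w 2 = w 1 + 3 * A%:Z + 1 + o%:Z /\ w 3 = w 2 + 3 * C%:Z + 1 + o%:Z.
  have := res 2 1 isT; have := res 3 1 isT; have := res 3 2 isT => *.
  exists (absz (divz (w 2 - w 1) 3)), (absz (divz (w 3 - w 2) 3)).
  have [r|r] : modz (w 2 - w 1) 3 = 1 \/ modz (w 2 - w 1) 3 = 2 by lia.
  - by exists false; lia.
  - by exists true; lia.
have [-> -> ->] :
    [/\ inv_count w 1 = (o + A.*2 + C)%N, inv_count w 2 = C & inv_count w 3 = 0%N].
  rewrite /inv_count /inv_gap.
  rewrite (erefl : w (1 + 1) = w 2) (erefl : w (1 + 2) = w 3).
  rewrite (wP 1 : w (2 + 2) = _) (wP 2 : w (3 + 2) = _) w3E w2E.
  by split; lia.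
rewrite addnK /window /grass_window half_bit_double.
by split=> //; [lia | congr (_, _, _); lia].
Qed.

Theorem proposition3p6 (a b : nat) (w winv : int -> int) (c1 c2 c3 : nat) :
  is_affine_perm w ->
  affine_grassmannian w ->
  cancel w winv -> cancel winv w ->
  code_entry_is winv 1 c1 -> code_entry_is winv 2 c2 -> code_entry_is winv 3 c3 ->
  lambda_of_code [:: c1; c2; c3] = nseq a 2%N ++ nseq b 1%N ->
  card_is (reduced_word w) 'C(a + b./2, a).
Proof.
move=> [/bij_inj w_inj [wP wsum]] [w12 w23] wK winvK c1E c2E c3E.
have [inv3 inv21 wE] := window_grassmannian wP w_inj w12 w23 wsum.
have := code_perm_inv_count wP wK winvK c1E c2E c3E.
rewrite inv3 => /(lambda_of_code_perm inv21) ->.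
move=> /(congr1 (fun s => (count_mem 2 s, count_mem 1 s))%N).
rewrite !count_cat !count_nseq /= !mul1n !mul0n !addn0 !add0n => -[<- <-].
apply: (card_reduced_word wP); last by rewrite bin_gt0 leq_addr.
by rewrite wE window_length_grass nwords_grass_window.
Qed.
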